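(* Consider a (non-relational) refinement type system with judgments $\vdash e : T$ over types built from $\mathbb{N}$, function types $T\to U$ and refinements $\{x:T\mid\phi\}$, containing: (i) an application rule (from $\vdash e_1 : T\to U$ and $\vdash e_2:T$ infer $\vdash e_1\,e_2 : U$) and the typing $\vdash 0:\mathbb{N}$; (ii) a subsumption rule (from $\vdash e:T$ and $T\preceq U$ infer $\vdash e:U$); (iii) the subtyping equivalences $\{x:T\mid\phi\}\to\{y:U\mid\psi\}\simeq\{f:T\to U\mid \forall x:T.\ \phi\Rightarrow\psi[f\,x/y]\}$ and $T\simeq\{x:T\mid\top\}$, where $\simeq$ means subtyping in both directions; (iv) the rule of consequence $\{x:T\mid\phi\}\preceq\{x:T\mid\phi'\}$ whenever $\phi\Rightarrow\phi'$ is valid. Let $g$ be the recursive function $\mathtt{letrec}\ g\ x = \mathtt{case}\ x\ \mathtt{of}\ [0\Rightarrow 0 \mid s\,y \Rightarrow g\,x]$. Then: $g\,0$ evaluates to the value $0$; $g\,n$ diverges for every $n\neq 0$ (so $g$ satisfies the partial-correctness specification $\{x:\mathbb{N}\mid x\neq 0\}\to\{y:\mathbb{N}\mid\bot\}$); and if the system derives $\vdash g : \{x:\mathbb{N}\mid x\neq 0\}\to\{y:\mathbb{N}\mid\bot\}$, then it also derives $\vdash g\,0 : \{x:\mathbb{N}\mid\bot\}$, although $g\,0$ reduces to a value and no value satisfies $\bot$. Hence a logical (partial-correctness) interpretation of non-termination is inconsistent with semantic subtyping in the presence of refinements at higher types.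
   Context: In a refinement type $\{x:T\mid\phi\}$, $\phi$ is a logical formula constraining $x$; $\bot$ is falsity and $\top$ truth. $\psi[f\,x/y]$ denotes substitution of $f\,x$ for $y$ in $\psi$. A type system is consistent in the intended sense if whenever $\vdash e:\{x:\mathbb{N}\mid\phi\}$ and $e$ reduces to a value $v$, then $\phi[v/x]$ holds. *)

From Stdlib Require Import Arith.

Definition var := nat.

Inductive expr : Type :=
| Var  : var -> expr
| Zero : expr
| Succ : expr -> expr
| App  : expr -> expr -> expr
| Lam  : var -> expr -> expr
| Fix  : var -> var -> expr -> expr            (* letrec f x = body *)
| Case : expr -> expr -> var -> expr -> expr.  (* case e of [0 => e0 | s y => e1] *)

Inductive ty : Type :=
| TNat : ty
| TArr : ty -> ty -> ty
| TRef : var -> ty -> form -> ty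
with form : Type :=
| FTrue   : form
| FFalse  : form
| FEq     : expr -> expr -> form
| FImp    : form -> form -> form
| FForall : var -> ty -> form -> form.

Definition FNeq (a b : expr) : form := FImp (FEq a b) FFalse.

Fixpoint esubst (z : var) (t : expr) (e : expr) : expr :=
  match e with
  | Var w => if Nat.eqb w z then t else Var w
  | Zero => Zero
  | Succ e1 => Succ (esubst z t e1)
  | App e1 e2 => App (esubst z t e1) (esubst z t e2)
  | Lam x b => if Nat.eqb x z then Lam x b else Lam x (esubst z t b)
  | Fix f x b => if (Nat.eqb f z || Nat.eqb x z)%bool then Fix f x b
                 else Fix f x (esubst z t b)
  | Case e0 e1 y e2 => Case (esubst z t e0) (esubst z t e1) y
                         (if Nat.eqb y z then e2 else esubst z t e2)
  end.

Fixpoint tsubst (z : var) (t : expr) (T : ty) : ty :=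
  match T with
  | TNat => TNat
  | TArr A B => TArr (tsubst z t A) (tsubst z t B)
  | TRef x A phi => TRef x (tsubst z t A)
                      (if Nat.eqb x z then phi else fsubst z t phi)
  end
with fsubst (z : var) (t : expr) (phi : form) : form :=
  match phi with
  | FTrue => FTrue
  | FFalse => FFalse
  | FEq a b => FEq (esubst z t a) (esubst z t b)
  | FImp p q => FImp (fsubst z t p) (fsubst z t q)
  | FForall x A p => FForall x (tsubst z t A)
                       (if Nat.eqb x z then p else fsubst z t p)
  end.

Fixpoint efree (z : var) (e : expr) : bool :=
  match e with
  | Var w => Nat.eqb w z
  | Zero => false
  | Succ e1 => efree z e1
  | App e1 e2 => efree z e1 || efree z e2
  | Lam x b => negb (Nat.eqb x z) && efree z b
  | Fix f x b => negb (Nat.eqb f z || Nat.eqb x z) && efree z b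
  | Case e0 e1 y e2 => efree z e0 || efree z e1 || (negb (Nat.eqb y z) && efree z e2)
  end%bool.

Fixpoint tfree (z : var) (T : ty) : bool :=
  match T with
  | TNat => false
  | TArr A B => tfree z A || tfree z B
  | TRef x A phi => tfree z A || (negb (Nat.eqb x z) && ffree z phi)
  end%bool
with ffree (z : var) (phi : form) : bool :=
  match phi with
  | FTrue | FFalse => false
  | FEq a b => efree z a || efree z b
  | FImp p q => ffree z p || ffree z q
  | FForall x A p => tfree z A || (negb (Nat.eqb x z) && ffree z p)
  end%bool.

Inductive eval : expr -> expr -> Prop :=
| ev_zero : eval Zero Zero
| ev_succ : forall e v, eval e v -> eval (Succ e) (Succ v)
| ev_lam  : forall x b, eval (Lam x b) (Lam x b)
| ev_fix  : forall f x b, eval (Fix f x b) (Fix f x b)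
| ev_app_lam : forall e1 e2 x b v r,
    eval e1 (Lam x b) -> eval e2 v -> eval (esubst x v b) r -> eval (App e1 e2) r
| ev_app_fix : forall e1 e2 f x b v r,
    eval e1 (Fix f x b) -> eval e2 v ->
    eval (esubst x v (esubst f (Fix f x b) b)) r -> eval (App e1 e2) r
| ev_case_zero : forall e e0 y e1 r,
    eval e Zero -> eval e0 r -> eval (Case e e0 y e1) r
| ev_case_succ : forall e e0 y e1 v r,
    eval e (Succ v) -> eval (esubst y v e1) r -> eval (Case e e0 y e1) r.

Fixpoint numeral (n : nat) : expr :=
  match n with O => Zero | S m => Succ (numeral m) end.

Definition diverges (e : expr) : Prop := ~ exists v, eval e v.

Definition env := var -> expr.
Definition upd (rho : env) (x : var) (v : expr) : env :=
  fun z => if Nat.eqb z x then v else rho z.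

Fixpoint msubst (rho : env) (e : expr) : expr :=
  match e with
  | Var w => rho w
  | Zero => Zero
  | Succ e1 => Succ (msubst rho e1)
  | App e1 e2 => App (msubst rho e1) (msubst rho e2)
  | Lam x b => Lam x (msubst (upd rho x (Var x)) b)
  | Fix f x b => Fix f x (msubst (upd (upd rho f (Var f)) x (Var x)) b)
  | Case e0 e1 y e2 => Case (msubst rho e0) (msubst rho e1) y
                         (msubst (upd rho y (Var y)) e2)
  end.

Definition is_fun (v : expr) : Prop :=
  match v with Lam _ _ | Fix _ _ _ => True | _ => False end.

(* Partial-correctness semantics of types (sets of closed values) and of formulas. *)
Fixpoint in_ty (rho : env) (T : ty) (v : expr) {struct T} : Prop :=
  match T with
  | TNat => exists n, v = numeral n
  | TArr A B => is_fun v /\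
      forall w, in_ty rho A w -> forall r, eval (App v w) r -> in_ty rho B r
  | TRef x A phi => in_ty rho A v /\ sat (upd rho x v) phi
  end
with sat (rho : env) (phi : form) {struct phi} : Prop :=
  match phi with
  | FTrue => True
  | FFalse => False
  | FEq a b => exists v, eval (msubst rho a) v /\ eval (msubst rho b) v
  | FImp p q => sat rho p -> sat rho q
  | FForall x A p => forall v, in_ty rho A v -> sat (upd rho x v) p
  end.

Definition valid_imp (x : var) (T : ty) (phi phi' : form) : Prop :=
  forall rho v, in_ty rho T v -> sat (upd rho x v) phi -> sat (upd rho x v) phi'.

(* letrec g x = case x of [0 => 0 | s y => g x]   (g = 0, x = 1, y = 2) *)
Definition vg : var := 0.
Definition vx : var := 1.
Definition vy : var := 2.
Definition g_fun : expr := Fix vg vx (Case (Var vx) Zero vy (App (Var vg) (Var vx))).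

Definition g_spec : ty := TArr (TRef vx TNat (FNeq (Var vx) Zero)) (TRef vy TNat FFalse).
(* {y:N | False}, alpha-equivalent to the paper's {x:N | False} *)
Definition bot_nat : ty := TRef vy TNat FFalse.

(* g 0 returns 0 at once, while on s m the body of g unfolds in two evaluation
   steps back to the call g (s m), so no finite derivation of its evaluation
   exists and the specification {x:N | x <> 0} -> {y:N | False} holds in the
   partial-correctness sense.  The arrow equivalence turns that specification
   into the refinement  forall x:N. x <> 0 => False  on g, which is itself
   false (take x = 1) and hence implies, by the rule of consequence, the
   refinement  forall x:N. True => False.  Turning it back into an arrow types
   g at {x:N | True} -> {y:N | False}, and 0 : {x:N | True}. *)
From Stdlib Require Import Arith.

Lemma eval_numeral_inv n v : eval (numeral n) v -> v = numeral n.
Proof.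
  revert v; induction n as [|n IH]; intros v Hv; inversion Hv; subst; simpl.
  - reflexivity.
  - f_equal; auto.
Qed.

Lemma esubst_numeral z t n : esubst z t (numeral n) = numeral n.
Proof. induction n as [|n IH]; simpl; congruence. Qed.

Lemma g_fun_zero : eval (App g_fun Zero) Zero.
Proof.
  eapply ev_app_fix; [constructor | constructor |].
  simpl; apply ev_case_zero; constructor.
Qed.

(* The two expressions the evaluation of g (s m) cycles through. *)
Definition g_loop_state (m : nat) (e : expr) : Prop :=
  e = App g_fun (numeral (S m)) \/
  e = Case (numeral (S m)) Zero vy (App g_fun (numeral (S m))).

Lemma g_loop_state_no_eval e r : eval e r -> forall m, ~ g_loop_state m e.
Proof.
  induction 1 as [| | | |e1 e2 x b v r H1 _ _ _ _ _
                  |e1 e2 f x b v r H1 _ H2 _ _ IHb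
                  |e e0 y e1 r He _ _ _|e e0 y e1 v r He _ _ IHb];
    intros m [E | E]; try discriminate E.
  - injection E as -> ->; inversion H1.
  - injection E as -> ->; inversion H1; subst.
    apply (eval_numeral_inv (S m)) in H2; subst v.
    apply (IHb m); right; reflexivity.
  - injection E as -> -> -> ->.
    apply (eval_numeral_inv (S m)) in He; discriminate He.
  - injection E as -> -> -> ->.
    apply (eval_numeral_inv (S m)) in He; injection He as ->.
    apply (IHb m); left; simpl; rewrite esubst_numeral; reflexivity.
Qed.

Lemma g_fun_diverges n : n <> 0 -> diverges (App g_fun (numeral n)).
Proof.
  destruct n as [|m]; [congruence|].
  intros _ [r Hr]; apply (g_loop_state_no_eval _ _ Hr m); left; reflexivity.
Qed.

Lemma g_fun_in_spec rho : in_ty rho g_spec g_fun.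
Proof.
  split; [exact I|].
  intros w [[[|m] ->] Hneq] r Hr; exfalso.
  - apply Hneq; exists Zero; split; constructor.
  - apply (g_fun_diverges (S m)); [discriminate | exists r; exact Hr].
Qed.

Lemma bot_nat_empty rho v : ~ in_ty rho bot_nat v.
Proof. intros [_ []]. Qed.

Lemma valid_imp_of_unsat x T phi phi' :
  (forall rho v, in_ty rho T v -> ~ sat (upd rho x v) phi) ->
  valid_imp x T phi phi'.
Proof. intros Hunsat rho v HT Hphi; contradiction (Hunsat rho v HT Hphi). Qed.

Lemma nonzero_nat_refutable x rho :
  ~ sat rho (FForall x TNat (FImp (FNeq (Var x) Zero) FFalse)).
Proof.
  intros H; apply (H (numeral 1)); [exists 1; reflexivity|].
  intros [v [H1 H0]]; simpl in H1, H0.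
  unfold upd in H1; rewrite Nat.eqb_refl in H1.
  inversion H0; subst; inversion H1.
Qed.

Definition arrow_refinement (x : var) (T : ty) (phi : form) (y : var) (f : var)
  (psi : form) : form :=
  FForall x T (FImp phi (fsubst y (App (Var f) (Var x)) psi)).

Section RefinementTyping.

Variable typ : expr -> ty -> Prop.
Variable sub : ty -> ty -> Prop.

Hypothesis typ_app : forall e1 e2 T U,
  typ e1 (TArr T U) -> typ e2 T -> typ (App e1 e2) U.
Hypothesis typ_zero : typ Zero TNat.
Hypothesis typ_sub : forall e T U, typ e T -> sub T U -> typ e U.
Hypothesis sub_arrow_refinement : forall x T phi y U psi f,
  f <> x -> ffree f phi = false -> ffree f psi = false ->
  sub (TArr (TRef x T phi) (TRef y U psi))
      (TRef f (TArr T U) (arrow_refinement x T phi y f psi)) /\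
  sub (TRef f (TArr T U) (arrow_refinement x T phi y f psi))
      (TArr (TRef x T phi) (TRef y U psi)).
Hypothesis sub_true_refinement : forall x T,
  sub T (TRef x T FTrue) /\ sub (TRef x T FTrue) T.
Hypothesis sub_consequence : forall x T phi phi',
  valid_imp x T phi phi' -> sub (TRef x T phi) (TRef x T phi').

Lemma typ_arrow_consequence e f x T phi phi' y U psi psi' :
  f <> x ->
  ffree f phi = false -> ffree f psi = false ->
  ffree f phi' = false -> ffree f psi' = false ->
  valid_imp f (TArr T U) (arrow_refinement x T phi y f psi)
                         (arrow_refinement x T phi' y f psi') ->
  typ e (TArr (TRef x T phi) (TRef y U psi)) ->
  typ e (TArr (TRef x T phi') (TRef y U psi')).
Proof.
  intros Hfx Hphi Hpsi Hphi' Hpsi' Hvalid He.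
  assert (Hrefined : typ e (TRef f (TArr T U) (arrow_refinement x T phi y f psi))).
  { exact (typ_sub _ _ _ He
             (proj1 (sub_arrow_refinement x T phi y U psi f Hfx Hphi Hpsi))). }
  apply (typ_sub _ _ _ (typ_sub _ _ _ Hrefined (sub_consequence _ _ _ _ Hvalid))).
  exact (proj2 (sub_arrow_refinement x T phi' y U psi' f Hfx Hphi' Hpsi')).
Qed.

Lemma typ_app_true_refinement e1 e2 x T U :
  typ e1 (TArr (TRef x T FTrue) U) -> typ e2 T -> typ (App e1 e2) U.
Proof.
  intros H1 H2; apply (typ_app _ _ _ _ H1).
  exact (typ_sub _ _ _ H2 (proj1 (sub_true_refinement x T))).
Qed.

Lemma typ_g_fun_zero_bot : typ g_fun g_spec -> typ (App g_fun Zero) bot_nat.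
Proof.
  intros Hg; apply typ_app_true_refinement with (x := vx) (T := TNat);
    [| exact typ_zero].
  apply (typ_arrow_consequence g_fun vg vx TNat (FNeq (Var vx) Zero) FTrue
           vy TNat FFalse FFalse); try reflexivity; [discriminate | | exact Hg].
  apply valid_imp_of_unsat; intros rho v _.
  exact (nonzero_nat_refutable vx (upd rho vg v)).
Qed.

End RefinementTyping.

Theorem mainTheorem2 :
  eval (App g_fun Zero) Zero /\
  (forall n, n <> 0 -> diverges (App g_fun (numeral n))) /\
  (forall rho, in_ty rho g_spec g_fun) /\
  (forall rho v, ~ in_ty rho bot_nat v) /\
  (forall (typ : expr -> ty -> Prop) (sub : ty -> ty -> Prop),
     (forall e1 e2 T U, typ e1 (TArr T U) -> typ e2 T -> typ (App e1 e2) U) ->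
     typ Zero TNat ->
     (forall e T U, typ e T -> sub T U -> typ e U) ->
     (forall x T phi y U psi f,
        f <> x -> ffree f phi = false -> ffree f psi = false ->
        sub (TArr (TRef x T phi) (TRef y U psi))
            (TRef f (TArr T U)
               (FForall x T (FImp phi (fsubst y (App (Var f) (Var x)) psi)))) /\
        sub (TRef f (TArr T U)
               (FForall x T (FImp phi (fsubst y (App (Var f) (Var x)) psi))))
            (TArr (TRef x T phi) (TRef y U psi))) ->
     (forall x T, sub T (TRef x T FTrue) /\ sub (TRef x T FTrue) T) ->
     (forall x T phi phi', valid_imp x T phi phi' -> sub (TRef x T phi) (TRef x T phi')) ->
     typ g_fun g_spec -> typ (App g_fun Zero) bot_nat).
Proof.
  split; [exact g_fun_zero|].
  split; [exact g_fun_diverges|].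
  split; [exact g_fun_in_spec|].
  split; [exact bot_nat_empty|].
  intros typ sub Happ Hzero Hsub Harr Htrue Hcons.
  exact (typ_g_fun_zero_bot typ sub Happ Hzero Hsub Harr Htrue Hcons).
Qed.
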